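(* (Euler's Formula for Resistance Function II.) Let $\Gamma$ be a metrized graph whose edges $e_i\in E(\Gamma)$ have end points $p_i,q_i$ and lengths $L_i$. For any $s,t\in V(\Gamma)$, $$r(s,t)=\frac14\sum_{e_i\in E(\Gamma)}\frac{1}{L_i}\Big[r(p_i,s)-r(q_i,s)-r(p_i,t)+r(q_i,t)\Big]^2.$$
   Context: A metrized graph $\Gamma$ is a finite connected graph (multiple edges and self-loops allowed) in which each edge is identified with a closed line segment of positive length; $V(\Gamma)$ is a chosen finite vertex set and $E(\Gamma)$ the resulting edge set. $\Gamma$ is regarded as a resistive electric circuit in which each edge is a resistor whose resistance equals its length, and $r(x,y)$ denotes the effective resistance between $x$ and $y$. *)

From HB Require Import structures.
From mathcomp Require Import all_boot all_order all_algebra.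
Set Implicit Arguments. Unset Strict Implicit. Unset Printing Implicit Defensive.
Import Order.TTheory GRing.Theory Num.Theory.
Local Open Scope ring_scope.

(* A metrized graph with vertex set V (a finite type), edges indexed by 'I_m;
   edge i has end points p i, q i (p i = q i allowed: self-loop; parallel
   edges allowed) and length L i > 0. *)

Definition madj (V : finType) (m : nat) (p q : 'I_m -> V) : rel V :=
  fun x y => [exists i : 'I_m, ((p i == x) && (q i == y)) || ((p i == y) && (q i == x))].

Definition mconnected (V : finType) (m : nat) (p q : 'I_m -> V) : Prop :=
  forall x y : V, connect (madj p q) x y.

(* Kirchhoff's current law: v is the potential when a unit current enters the
   circuit at x and leaves at y (each edge is a resistor of resistance L i). *)
Definition unit_current_potential (R : realFieldType) (V : finType) (m : nat)
    (p q : 'I_m -> V) (L : 'I_m -> R) (x y : V) (v : V -> R) : Prop :=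
  forall z : V,
    \sum_(i < m) (((p i == z)%:R - (q i == z)%:R) * (v (p i) - v (q i)) / L i)
      = (z == x)%:R - (z == y)%:R.

Definition is_resistance_function (R : realFieldType) (V : finType) (m : nat)
    (p q : 'I_m -> V) (L : 'I_m -> R) (r : V -> V -> R) : Prop :=
  forall x y : V, exists v : V -> R,
    unit_current_potential p q L x y v /\ r x y = v x - v y.

(** Let [u] be the potential of a unit current from [s] to [t]. Green's
    identity for the Dirichlet form [E(v, w) = sum_i (dv)_i (dw)_i / L_i] gives
    [E(u, w) = w s - w t]; hence [r(s, t) = E(u, u)], and reciprocity
    [E(u, v) = E(v, u)] together with superposition of currents shows that the
    bracket in the formula, on edge [i], is [-2 (u p_i - u q_i)]. *)

From HB Require Import structures.
From mathcomp Require Import all_boot all_order all_algebra.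
From mathcomp Require Import ring lra.
Set Implicit Arguments. Unset Strict Implicit. Unset Printing Implicit Defensive.
Import Order.TTheory GRing.Theory Num.Theory.
Local Open Scope ring_scope.

Section Circuit.
Variables (R : realFieldType) (V : finType) (m : nat).
Variables (p q : 'I_m -> V) (L : 'I_m -> R).

Local Notation potential := (unit_current_potential p q L).

Definition dirichlet_form (v w : V -> R) : R :=
  \sum_(i < m) (v (p i) - v (q i)) * (w (p i) - w (q i)) / L i.

Lemma dirichlet_formC v w : dirichlet_form v w = dirichlet_form w v.
Proof. by apply: eq_bigr => i _; rewrite (mulrC (v _ - _)). Qed.

Lemma sum_mul_indicator (w : V -> R) a : \sum_z w z * (z == a)%:R = w a.
Proof.
rewrite -(big_pred1_eq +%R a w) big_mkcond.
by apply: eq_bigr => z _; rewrite mulr_natr mulrb.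
Qed.

Lemma sum_mul_indicatorB (w : V -> R) a b :
  \sum_z w z * ((z == a)%:R - (z == b)%:R) = w a - w b.
Proof.
by rewrite -!sum_mul_indicator -sumrB; apply: eq_bigr => z _; rewrite mulrBr.
Qed.

Lemma dirichlet_form_potential x y v w :
  potential x y v -> dirichlet_form v w = w x - w y.
Proof.
move=> Kv; rewrite -sum_mul_indicatorB.
under [RHS]eq_bigr => z _ do rewrite -Kv mulr_sumr.
rewrite exchange_big /=; apply: eq_bigr => i _.
rewrite -[w (p i) - _]sum_mul_indicatorB mulrAC mulr_sumr.
by apply: eq_bigr => z _; rewrite (eq_sym z) (eq_sym z); ring.
Qed.

Lemma potential_reciprocity x y c d v w :
  potential x y v -> potential c d w -> w x - w y = v c - v d.
Proof.
move=> Kv Kw.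
rewrite -(dirichlet_form_potential w Kv) dirichlet_formC.
exact: dirichlet_form_potential.
Qed.

Lemma potentialB x y z v w :
  potential x z v -> potential y z w -> potential x y (fun a => v a - w a).
Proof.
move=> Kv Kw a.
have -> : (a == x)%:R - (a == y)%:R =
          ((a == x)%:R - (a == z)%:R) - ((a == y)%:R - (a == z)%:R) :> R.
  by rewrite opprB addrA subrK.
by rewrite -Kv -Kw -sumrB; apply: eq_bigr => i _; ring.
Qed.

Variable r : V -> V -> R.
Hypothesis resistance_r : is_resistance_function p q L r.

Lemma potential_diff_unique x y c d v w :
  potential x y v -> potential x y w -> v c - v d = w c - w d.
Proof.
move=> Kv Kw; have [g [Kg _]] := resistance_r c d.
by rewrite (potential_reciprocity Kg Kv) (potential_reciprocity Kg Kw).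
Qed.

Lemma resistance_potential x y v : potential x y v -> r x y = v x - v y.
Proof.
move=> Kv; have [w [Kw ->]] := resistance_r x y.
exact: potential_diff_unique Kw Kv.
Qed.

Lemma resistanceB_potential s t u a :
  potential s t u -> r a s - r a t = u s + u t - 2 * u a.
Proof.
move=> Ku; have [g [Kg rat]] := resistance_r a t.
rewrite rat (resistance_potential (potentialB Kg Ku)).
have := potential_reciprocity Kg Ku; lra.
Qed.

End Circuit.

Theorem theorem3p9 (R : realFieldType) (V : finType) (m : nat)
    (p q : 'I_m -> V) (L : 'I_m -> R)
    (hL : forall i, 0 < L i)
    (hconn : mconnected p q)
    (r : V -> V -> R) (hr : is_resistance_function p q L r)
    (s t : V) :
  r s t = 4^-1 * \sum_(i < m)
            (L i)^-1 * (r (p i) s - r (q i) s - r (p i) t + r (q i) t) ^+ 2.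
Proof.
have [u [Ku rst]] := hr s t.
rewrite rst -(dirichlet_form_potential u Ku) mulr_sumr.
apply: eq_bigr => i _.
have -> : r (p i) s - r (q i) s - r (p i) t + r (q i) t = - (2 * (u (p i) - u (q i))).
  have := resistanceB_potential hr (p i) Ku.
  have := resistanceB_potential hr (q i) Ku; lra.
have Li_neq0 : L i != 0 by rewrite lt0r_neq0.
by rewrite sqrrN; field.
Qed.
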